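(* Let $F$ be strictly convex and twice differentiable on an open convex domain $\mathcal{X}\subseteq\mathbb{R}^d$, with Bregman divergence $D_F$, and let $\mu\ge 1$. (i) If $D_F$ is $\mu$-similar then it is $2\mu$-admissible. (ii) If $D_F$ is $\mu$-admissible then it is directionally $\mu$-admissible. (iii) $D_F$ is $\mu$-asymmetric if and only if it is directionally $(1+\mu)$-admissible.
   Context: $D_F(q,p)=F(q)-F(p)-\langle\nabla F(p),q-p\rangle$. For a site $p\in\mathcal{X}$, let $f_p(x)=D_F(x,p)$ with derivatives taken in $x$. $D_F$ is $\tau$-admissible if for all $p,x\in\mathcal{X}$: $\|\nabla f_p(x)\|\,\|x-p\|\le\tau f_p(x)$ and $\|\nabla^2 f_p(x)\|\,\|x-p\|^2\le\tau^2 f_p(x)$ (Euclidean/spectral norms). $D_F$ is directionally $\tau$-admissible if for all $p,x\in\mathcal{X}$: $\langle\nabla f_p(x),x-p\rangle\le\tau f_p(x)$. $D_F$ is $\mu$-asymmetric if $D_F(q,p)\le\mu D_F(p,q)$ for all $p,q\in\mathcal{X}$. $D_F$ is $\mu$-similar if $\|q-p\|^2\le D_F(q,p)\le\mu\|q-p\|^2$ for all $p,q\in\mathcal{X}$. *)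

From HB Require Import structures.
From mathcomp Require Import all_boot all_order all_algebra.
From mathcomp Require Import all_classical all_reals all_analysis.
Set Implicit Arguments. Unset Strict Implicit. Unset Printing Implicit Defensive.
Import Order.TTheory GRing.Theory Num.Theory.
Import numFieldNormedType.Exports.
Local Open Scope classical_set_scope.
Local Open Scope ring_scope.

Section Bregman.
Variables (R : realType) (d : nat).
Notation V := 'rV[R]_d.

Definition dotp (u v : V) : R := \sum_(i < d) u 0 i * v 0 i.
Definition enorm (v : V) : R := Num.sqrt (dotp v v).

Definition spec_norm (A : 'M[R]_d) : R :=
  sup [set enorm ((A *m v^T)^T) | v in [set v : V | enorm v <= 1]].

Definition grad (f : V -> R) (x : V) : V :=
  \row_(i < d) ('d f x (delta_mx 0 i : V)).
Definition hess (f : V -> R) (x : V) : 'M[R]_d :=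
  \matrix_(i < d, j < d) ('d (grad f) x (delta_mx 0 j : V)) 0 i.

Definition convex_dom (X : set V) : Prop :=
  forall x y (t : R), X x -> X y -> 0 <= t <= 1 -> X (t *: x + (1 - t) *: y).

Definition strictly_convex_on (X : set V) (F : V -> R) : Prop :=
  forall x y (t : R), X x -> X y -> x != y -> 0 < t < 1 ->
    F (t *: x + (1 - t) *: y) < t * F x + (1 - t) * F y.

Definition twice_differentiable_on (X : set V) (F : V -> R) : Prop :=
  forall x, X x -> differentiable F x /\ differentiable (grad F) x.

Definition bregman (F : V -> R) (q p : V) : R :=
  F q - F p - dotp (grad F p) (q - p).

Definition fsite (F : V -> R) (p : V) : V -> R := fun x => bregman F x p.

Definition bregman_admissible (X : set V) (F : V -> R) (tau : R) : Prop :=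
  forall p x, X p -> X x ->
    enorm (grad (fsite F p) x) * enorm (x - p) <= tau * fsite F p x /\
    spec_norm (hess (fsite F p) x) * enorm (x - p) ^+ 2 <= tau ^+ 2 * fsite F p x.

Definition bregman_dir_admissible (X : set V) (F : V -> R) (tau : R) : Prop :=
  forall p x, X p -> X x ->
    dotp (grad (fsite F p) x) (x - p) <= tau * fsite F p x.

Definition bregman_asymmetric (X : set V) (F : V -> R) (mu : R) : Prop :=
  forall p q, X p -> X q -> bregman F q p <= mu * bregman F p q.

Definition bregman_similar (X : set V) (F : V -> R) (mu : R) : Prop :=
  forall p q, X p -> X q ->
    enorm (q - p) ^+ 2 <= bregman F q p /\ bregman F q p <= mu * enorm (q - p) ^+ 2.

End Bregman.

From HB Require Import structures.
From mathcomp Require Import all_boot all_order all_algebra.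
From mathcomp Require Import all_classical all_reals all_analysis.
From mathcomp Require Import ring lra.
Import Order.TTheory GRing.Theory Num.Theory.
Import numFieldNormedType.Exports.
Local Open Scope classical_set_scope.
Local Open Scope ring_scope.

(* If D_F is mu-similar then grad F is 2 mu-Lipschitz.  For y, z in the domain put
   w := y - (grad F y - grad F z) / (2 mu); when w is in the domain too, the
   three-point identity
     D(w,z) = D(w,y) + D(y,z) + <grad F y - grad F z, w - y>
   with 0 <= D(w,z), D(w,y) <= mu |w - y|^2 and D(y,z) <= mu |y - z|^2 yields
   |grad F y - grad F z| <= 2 mu |y - z|.  This holds for y near z, so the
   differential of grad F, i.e. the Hessian of f_p, has operator norm at most 2 mu,
   and the mean value theorem along segments makes the Lipschitz bound global.
   As grad f_p x = grad F x - grad F p and |x - p|^2 <= f_p x, both admissibility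
   inequalities follow with tau = 2 mu.  Admissibility implies directional
   admissibility by Cauchy-Schwarz, and <grad f_p x, x - p> = D(x,p) + D(p,x)
   makes directional (1 + mu)-admissibility equivalent to mu-asymmetry. *)

Section Euclidean.
Context {R : realType} {d : nat}.
Implicit Types (u v w : 'rV[R]_d) (a : R).

Lemma dotpC u v : dotp u v = dotp v u.
Proof. by apply: eq_bigr => i _; rewrite mulrC. Qed.

Lemma dotp_is_linear u : linear (dotp u).
Proof.
move=> a v w; rewrite /dotp scaler_sumr -big_split; apply: eq_bigr => i _.
by rewrite !mxE mulrDr mulrCA.
Qed.

HB.instance Definition _ u :=
  GRing.isLinear.Build R 'rV[R]_d R *:%R (dotp u) (dotp_is_linear u).

Lemma dotpZr a u v : dotp u (a *: v) = a * dotp u v.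
Proof. exact: linearZ. Qed.

Lemma dotpNr u v : dotp u (- v) = - dotp u v.
Proof. exact: linearN. Qed.

Lemma dotpBr u v w : dotp u (v - w) = dotp u v - dotp u w.
Proof. exact: linearB. Qed.

Lemma dotpBl u v w : dotp (v - w) u = dotp v u - dotp w u.
Proof. by rewrite dotpC dotpBr !(dotpC u). Qed.

Lemma dotpZl a u v : dotp (a *: v) u = a * dotp v u.
Proof. by rewrite dotpC dotpZr dotpC. Qed.

Lemma dotpp_ge0 u : 0 <= dotp u u.
Proof. by apply: sumr_ge0 => i _; rewrite -expr2 sqr_ge0. Qed.

Lemma dotpp_eq0 u : (dotp u u == 0) = (u == 0).
Proof.
apply/eqP/eqP => [u0|->]; last by rewrite linear0.
apply/rowP => i; apply/eqP; rewrite mxE -[_ == 0]orbb -mulf_eq0.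
by rewrite (psumr_eq0P _ u0) // => j _; rewrite -expr2 sqr_ge0.
Qed.

Lemma enorm_ge0 u : 0 <= enorm u.
Proof. exact: sqrtr_ge0. Qed.

Lemma enorm_sqr u : enorm u ^+ 2 = dotp u u.
Proof. by rewrite sqr_sqrtr // dotpp_ge0. Qed.

Lemma enorm_eq0 u : (enorm u == 0) = (u == 0).
Proof. by rewrite -sqrf_eq0 enorm_sqr dotpp_eq0. Qed.

Lemma enormN u : enorm (- u) = enorm u.
Proof. by rewrite /enorm dotpNr dotpC dotpNr opprK. Qed.

Lemma enormZ a u : enorm (a *: u) = `|a| * enorm u.
Proof.
by rewrite /enorm dotpZl dotpZr mulrA -expr2 sqrtrM ?sqr_ge0 // sqrtr_sqr.
Qed.

Lemma dotp_le_enorm u v : dotp u v <= enorm u * enorm v.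
Proof.
have [->|u0] := eqVneq u 0; first by rewrite dotpC linear0 mulr_ge0 ?enorm_ge0.
have [->|v0] := eqVneq v 0; first by rewrite linear0 mulr_ge0 ?enorm_ge0.
have ab_gt0 : 0 < enorm u * enorm v.
  by rewrite mulr_gt0 // lt_def enorm_ge0 enorm_eq0 ?u0 ?v0.
(* expand [0 <= |(|v| u - |u| v)|^2] *)
have := dotpp_ge0 (enorm v *: u - enorm u *: v).
rewrite dotpBl !dotpBr !dotpZl !dotpZr (dotpC v u) -!enorm_sqr => h.
by rewrite -(ler_pM2l ab_gt0); nra.
Qed.

Lemma enorm_le_dotpp u c : 0 <= c -> dotp u u <= c * enorm u -> enorm u <= c.
Proof. by rewrite -enorm_sqr => c_ge0 h; have := enorm_ge0 u; nra. Qed.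

End Euclidean.

Lemma near_eq_diff {R : realType} {V W : normedModType R} {f g : V -> W} {x} :
  differentiable f x -> {near x, f =1 g} -> 'd g x = 'd f x :> (V -> W).
Proof.
move=> df fg.
have shift_cvg : (fun h : V => h + x) @ 0 --> x.
  by rewrite -[x in _ --> x]add0r; apply: cvgD; [exact: cvg_id | exact: cvg_cst].
have fg0 : \forall h \near 0, f (h + x) = g (h + x) by exact: shift_cvg _ fg.
have /eqaddoP f_approx := diff_locally df.
apply: diff_unique; first exact: diff_continuous.
apply/eqaddoP => e e_gt0; apply: filterS2 fg0 (f_approx e e_gt0) => h fgh.
by rewrite !fctE /= -fgh -(nbhs_singleton fg).
Qed.

Lemma near_eq_diff_subr_cst {R : realType} {V W : normedModType R}
    {f g : V -> W} {c : W} {x} :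
  differentiable f x -> {near x, f - cst c =1 g} -> 'd g x = 'd f x :> (V -> W).
Proof.
move=> df fg; have dfc : differentiable (f - cst c) x by apply: differentiableB.
apply: etrans (near_eq_diff dfc fg) _; apply/funext => v.
have -> : 'd (f - cst c) x v = 'd f x v - 'd (cst c) x v by rewrite diffB.
by rewrite diff_cst subr0.
Qed.

Section Gradient.
Context {R : realType} {d : nat}.
Implicit Types (f : 'rV[R]_d -> R) (g p u v w x z : 'rV[R]_d).

Lemma dotp_continuous g : continuous (dotp g).
Proof.
have -> : dotp g = \sum_(i < d) (fun v : 'rV[R]_d => g 0 i * v 0 i).
  by apply/funext => v; rewrite fct_sumE.
move=> x; apply: (big_ind (fun f => {for x, continuous f})) => //.
- exact: cst_continuous.
- by move=> f1 f2; apply: continuousD.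
- move=> i _; apply: continuousM; first exact: cst_continuous.
  exact: coord_continuous.
Qed.

Lemma dotp_delta g i : dotp g (delta_mx 0 i) = g 0 i.
Proof.
rewrite /dotp (bigD1 i) //= big1 ?addr0; first by rewrite mxE !eqxx mulr1.
by move=> j ji; rewrite mxE (negbTE ji) andbF mulr0.
Qed.

Lemma grad_dotp g x : grad (dotp g) x = g.
Proof.
apply/rowP => i; rewrite mxE (diff_lin _ (dotp_continuous g)); exact: dotp_delta.
Qed.

Lemma grad_cst c x : grad (cst c) x = 0.
Proof. by apply/rowP => i; rewrite !mxE diff_cst. Qed.

Lemma gradB {f1 f2 x} : differentiable f1 x -> differentiable f2 x ->
  grad (f1 - f2) x = grad f1 x - grad f2 x.
Proof. by move=> df1 df2; apply/rowP => i; rewrite !mxE (diffB df1 df2). Qed.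

Lemma fsiteE F p :
  fsite F p = F - cst (F p - dotp (grad F p) p) - dotp (grad F p).
Proof. by apply/funext => y; rewrite /fsite /bregman !fctE dotpBr; ring. Qed.

Lemma grad_fsite F p x : differentiable F x ->
  grad (fsite F p) x = grad F x - grad F p.
Proof.
move=> dF; set c := F p - dotp (grad F p) p.
have dFc : differentiable (F - cst c) x by apply: differentiableB.
have dlin : differentiable (dotp (grad F p)) x.
  exact: linear_differentiable (dotp_continuous _).
rewrite fsiteE (gradB dFc dlin) (gradB dF (differentiable_cst _ _)).
by rewrite grad_cst grad_dotp subr0.
Qed.

Lemma hess_mulmx f x w : (hess f x *m w^T)^T = 'd (grad f) x w.
Proof.
rewrite [in RHS](row_sum_delta w) linear_sum /=.
apply/rowP => i; rewrite !mxE summxE; apply: eq_bigr => j _.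
by rewrite linearZ !mxE mulrC.
Qed.

Lemma dotp_diff_quotient_cvg {G : 'rV[R]_d -> 'rV[R]_d} {z} u v :
  differentiable G z ->
  (fun s : R => dotp v (s^-1 *: (G (s *: u + z) - G z))) @ 0^' -->
  dotp v ('d G z u).
Proof.
move=> dG; rewrite -deriveE //.
have quot_cvg : (fun s : R => s^-1 *: (G (s *: u + z) - G z)) @ 0^' --> 'D_u G z.
  exact: diff_derivable.
exact: continuous_cvg (dotp_continuous v _) quot_cvg.
Qed.

Lemma is_derive_dotp_line (G : 'rV[R]_d -> 'rV[R]_d) p u v t :
  differentiable G (t *: u + p) ->
  is_derive t 1 (fun t : R => dotp v (G (t *: u + p)))
    (dotp v ('d G (t *: u + p) u)).
Proof.
move=> dG.
have /funext quotE (s : R) :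
    s^-1 *: (dotp v (G ((s *: 1 + t) *: u + p)) - dotp v (G (t *: u + p))) =
    dotp v (s^-1 *: (G (s *: u + (t *: u + p)) - G (t *: u + p))).
  rewrite -dotpBr dotpZr (_ : s *: (1 : R) = s); last exact: mulr1.
  by rewrite scalerDl addrA.
have quot_cvg := dotp_diff_quotient_cvg u v dG; rewrite -quotE in quot_cvg.
by apply: DeriveDef; [exact: cvgP quot_cvg | exact: cvg_lim quot_cvg].
Qed.

End Gradient.

Lemma convex_dom_segment {R : realType} {d : nat} (X : set 'rV[R]_d) x p t :
  convex_dom X -> X x -> X p -> 0 <= t <= 1 -> X (t *: (x - p) + p).
Proof.
move=> convX Xx Xp t01; have := convX _ _ _ Xx Xp t01.
by rewrite scalerBl scale1r scalerBr -addrA (addrC (- _)).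
Qed.

Lemma spec_norm_le {R : realType} {d : nat} (A : 'M[R]_d) c : 0 <= c ->
  (forall v, enorm ((A *m v^T)^T) <= c * enorm v) -> spec_norm A <= c.
Proof.
move=> c_ge0 A_le; apply: ge_sup.
  by exists (enorm ((A *m 0^T)^T)), 0 => //=; rewrite /enorm linear0 sqrtr0.
move=> _ [v /= v_le1 <-]; apply: le_trans (A_le v) _.
by have := enorm_ge0 v; nra.
Qed.

Section BregmanIdentities.
Context {R : realType} {d : nat}.
Variable F : 'rV[R]_d -> R.
Implicit Types (p w x y z : 'rV[R]_d).

(* The gradients are generalized before rewriting: otherwise matching [grad F y]
   against [grad F z] unfolds [grad] down to the choice operator defining ['d]. *)
Lemma bregman_three_point w y z : bregman F w z =
  bregman F w y + bregman F y z + dotp (grad F y - grad F z) (w - y).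
Proof.
rewrite /bregman; move: (grad F y) (grad F z) => gy gz.
by rewrite !dotpBl !dotpBr; ring.
Qed.

Lemma dotp_grad_fsite p x : differentiable F x ->
  dotp (grad (fsite F p) x) (x - p) = bregman F x p + bregman F p x.
Proof.
move=> dF; rewrite grad_fsite // /bregman; move: (grad F x) (grad F p) => gx gp.
by rewrite dotpBl !dotpBr; ring.
Qed.

End BregmanIdentities.

Section SimilarGradient.
Context {R : realType} {d : nat}.
Variables (X : set 'rV[R]_d) (F : 'rV[R]_d -> R) (mu : R).
Hypotheses (openX : open X) (convX : convex_dom X) (mu_ge1 : 1 <= mu).
Hypotheses (simF : bregman_similar X F mu) (dF2 : twice_differentiable_on X F).
Local Notation G := (grad F).

Let mu_gt0 : 0 < mu. Proof. exact: lt_le_trans mu_ge1. Qed.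

Let two_mu_ge0 : 0 <= 2 * mu. Proof. by rewrite mulr_ge0 // ltW. Qed.

Let two_mu_ge1 : 1 <= 2 * mu.
Proof. by apply: le_trans mu_ge1 _; rewrite ler_peMl ?ler1n // ltW. Qed.

Lemma grad_lipschitz_step y z : X y -> X z ->
  X (y - (2 * mu)^-1 *: (G y - G z)) ->
  enorm (G y - G z) <= 2 * mu * enorm (y - z).
Proof.
set c := (2 * mu)^-1; move=> Xy Xz Xw.
have [wz_le _] := simF z _ Xz Xw.
have [_ wy_le] := simF y _ Xy Xw.
have [_ yz_le] := simF z y Xz Xy.
move: (bregman_three_point F (y - c *: (G y - G z)) y z) wz_le wy_le yz_le.
move: (bregman F _ z) (bregman F _ y) (bregman F y z) {Xw} => Bwz Bwy Byz.
move: (G y - G z) => g; have -> : y - c *: g - y = - (c *: g).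
  by rewrite addrAC subrr add0r.
rewrite dotpNr dotpZr -enorm_sqr enormN enormZ ger0_norm ?invr_ge0 //.
move=> -> /(le_trans (sqr_ge0 _)) B_ge0 wy_le yz_le.
have : 0 <= 4%:R * mu *
    (mu * (c * enorm g) ^+ 2 + mu * enorm (y - z) ^+ 2 - c * enorm g ^+ 2).
  by apply: mulr_ge0; [rewrite mulr_ge0 // ltW | lra].
have -> : 4%:R * mu *
    (mu * (c * enorm g) ^+ 2 + mu * enorm (y - z) ^+ 2 - c * enorm g ^+ 2) =
    (2 * mu * enorm (y - z)) ^+ 2 - enorm g ^+ 2.
  by rewrite /c; field; rewrite gt_eqF.
by rewrite subr_ge0 ler_pXn2r ?nnegrE ?mulr_ge0 ?enorm_ge0 // ltW.
Qed.

Lemma grad_lipschitz_near z : X z ->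
  \forall y \near z, enorm (G y - G z) <= 2 * mu * enorm (y - z).
Proof.
move=> Xz; have [_ dG] := dF2 z Xz.
have Xnear : nbhs z X by apply: open_nbhs_nbhs.
have : (fun y => y - (2 * mu)^-1 *: (G y - G z)) @ z -->
       z - (2 * mu)^-1 *: (G z - G z).
  exact: cvgB cvg_id
    (cvgZ (cvg_cst _) (cvgB (differentiable_continuous dG) (cvg_cst _))).
have -> : z - (2 * mu)^-1 *: (G z - G z) = z by rewrite subrr scaler0 subr0.
move=> step_cvg.
apply: filterS2 Xnear (step_cvg _ Xnear) => y Xy Xw.
exact: grad_lipschitz_step y z Xy Xz Xw.
Qed.

(* [enorm] is not the norm of the normed-module structure of 'rV (a sup norm),
   so the bound is passed to the limit through the continuous functional [dotp v]. *)
Lemma dotp_diff_grad_le z u v : X z ->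
  dotp v ('d G z u) <= 2 * mu * enorm u * enorm v.
Proof.
move=> Xz; have [_ dG] := dF2 z Xz.
have quot_cvg := dotp_diff_quotient_cvg u v dG.
rewrite -(cvg_lim _ quot_cvg) //; apply: limr_le; first exact: cvgP quot_cvg.
have line_cvg : (fun s : R => s *: u + z) @ 0 --> z.
  have : (fun s : R => s *: u + z) @ 0 --> 0 *: u + z.
    exact: cvgD (cvgZ cvg_id (cvg_cst _)) (cvg_cst _).
  by rewrite scale0r add0r.
have near_line := nbhs_dnbhs (line_cvg _ (grad_lipschitz_near _ Xz)).
have s_neq0 : \forall s \near 0^', s != 0 :> R by exact: nbhs_dnbhs_neq.
apply: filterS2 near_line s_neq0 => s /= le_s s_neq0.
rewrite addrK enormZ in le_s.
rewrite dotpC; apply: le_trans (dotp_le_enorm _ _) _.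
rewrite enormZ normfV -[X in X <= _]mulrA ler_pdivrMl ?normr_gt0 //.
by have := enorm_ge0 v; nra.
Qed.

Lemma enorm_diff_grad_le z u : X z -> enorm ('d G z u) <= 2 * mu * enorm u.
Proof.
move=> Xz; apply: enorm_le_dotpp; first by rewrite mulr_ge0 ?enorm_ge0.
exact: dotp_diff_grad_le.
Qed.

Lemma grad_lipschitz x p : X x -> X p ->
  enorm (G x - G p) <= 2 * mu * enorm (x - p).
Proof.
move=> Xx Xp; set v := G x - G p.
pose h t := dotp v (G (t *: (x - p) + p)).
have Xline (t : R) : 0 <= t <= 1 -> X (t *: (x - p) + p).
  exact: convex_dom_segment.
have h_derive (t : R) : t \in `[0, 1] ->
    is_derive t 1 h (dotp v ('d G (t *: (x - p) + p) (x - p))).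
  rewrite in_itv /= => t01; have [_ dG] := dF2 _ (Xline t t01).
  exact: is_derive_dotp_line.
have h_cont : {within `[0, 1], continuous h}.
  apply: continuous_in_subspaceT => t /set_mem t01.
  have [h_derivable _] := h_derive t t01.
  exact/differentiable_continuous/derivable1_diffP.
have [c] := MVT ltr01 (fun t t01 => h_derive t (subset_itv_oo_cc t01)) h_cont.
rewrite in_itv /= => /andP[c_gt0 c_lt1].
rewrite /h scale1r scale0r subrK add0r -dotpBr subr0 mulr1 -/v => vv_eq.
apply: enorm_le_dotpp; first by rewrite mulr_ge0 ?enorm_ge0.
by rewrite vv_eq dotp_diff_grad_le //; apply: Xline; rewrite !ltW.
Qed.

Lemma diff_grad_fsite p x : X x -> 'd (grad (fsite F p)) x = 'd G x :> (_ -> _).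
Proof.
move=> Xx; have [_ dG] := dF2 x Xx.
have near_eq : {near x, G - cst (G p) =1 grad (fsite F p)}.
  apply: filterS (open_nbhs_nbhs (conj openX Xx)) => y Xy.
  by have [dFy _] := dF2 y Xy; rewrite grad_fsite.
exact: near_eq_diff_subr_cst dG near_eq.
Qed.

Lemma spec_norm_hess_fsite_le p x : X x -> spec_norm (hess (fsite F p) x) <= 2 * mu.
Proof.
move=> Xx; apply: spec_norm_le => // v.
by rewrite hess_mulmx diff_grad_fsite // enorm_diff_grad_le.
Qed.

Lemma similar_admissible : bregman_admissible X F (2 * mu).
Proof.
move=> p x Xp Xx; have [dFx _] := dF2 x Xx.
have [dist_le _] : enorm (x - p) ^+ 2 <= fsite F p x /\ _ := simF p x Xp Xx.
have f_ge0 : 0 <= fsite F p x := le_trans (sqr_ge0 _) dist_le.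
have := enorm_ge0 (x - p); have := two_mu_ge0 => mu2_ge0 e_ge0.
split.
- by rewrite grad_fsite //; have := grad_lipschitz x p Xx Xp; nra.
- have := spec_norm_hess_fsite_le p x Xx.
  have : 0 <= (2 * mu - 1) * (2 * mu * fsite F p x).
    by apply: mulr_ge0; [rewrite subr_ge0 two_mu_ge1 | exact: mulr_ge0].
  nra.
Qed.

End SimilarGradient.

Lemma admissible_dir_admissible {R : realType} {d : nat} (X : set 'rV[R]_d) F tau :
  bregman_admissible X F tau -> bregman_dir_admissible X F tau.
Proof.
move=> adm p x Xp Xx; apply: le_trans (dotp_le_enorm _ _) _.
exact: (adm p x Xp Xx).1.
Qed.

Lemma asymmetric_dir_admissibleP {R : realType} {d : nat} (X : set 'rV[R]_d) F mu :
  (forall x, X x -> differentiable F x) ->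
  bregman_asymmetric X F mu <-> bregman_dir_admissible X F (1 + mu).
Proof.
move=> dF; split => [asym p x Xp Xx | dir p q Xp Xq].
- have := asym x p Xx Xp; rewrite dotp_grad_fsite; last exact: dF.
  by rewrite /fsite /=; lra.
- have := dir q p Xq Xp; rewrite dotp_grad_fsite; last exact: dF.
  by rewrite /fsite /=; lra.
Qed.

Theorem lemma8 (R : realType) (d : nat) (X : set 'rV[R]_d) (F : 'rV[R]_d -> R)
    (mu : R) :
  open X -> convex_dom X -> strictly_convex_on X F ->
  twice_differentiable_on X F -> 1 <= mu ->
  (bregman_similar X F mu -> bregman_admissible X F (2 * mu)) /\
  (bregman_admissible X F mu -> bregman_dir_admissible X F mu) /\
  (bregman_asymmetric X F mu <-> bregman_dir_admissible X F (1 + mu)).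
Proof.
move=> openX convX _ dF2 mu_ge1; split; [|split].
- by move=> simF; exact: similar_admissible.
- exact: admissible_dir_admissible.
- by apply: asymmetric_dir_admissibleP => x /dF2 [].
Qed.
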